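(* Let $G$ be a finite simple bipartite cactus graph. Then $S(G)$ is planar (i.e. has a planar drawing).
   Context: For a graph $G$, the great shadow $S(G)$ is the graph obtained from $G$ by adding, for each vertex $v$ of $G$, a new vertex $v'$ (the shadow vertex of $v$) and making $v'$ adjacent to $v$ and to every neighbor of $v$ in $G$; no other edges are added. A cactus graph is a connected graph in which no two cycles share an edge. A bipartite cactus is a cactus graph that is bipartite (all cycles have even length). *)

From mathcomp Require Import all_boot.
From Stdlib Require Import Reals.

Set Implicit Arguments.
Unset Strict Implicit.
Unset Printing Implicit Defensive.

Definition simple_graph (V : finType) (e : rel V) : Prop :=
  symmetric e /\ irreflexive e.

Definition connected_graph (V : finType) (e : rel V) : Prop :=
  forall x y : V, connect e x y.

Definition bipartite (V : finType) (e : rel V) : Prop :=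
  exists col : V -> bool, forall x y, e x y -> col x != col y.

Definition is_graph_cycle (V : finType) (e : rel V) (c : seq V) : bool :=
  [&& uniq c, 2 < size c & cycle e c].

Definition cycle_edges (V : finType) (c : seq V) : {set {set V}} :=
  [set [set x; next c x] | x in c].

Definition cactus (V : finType) (e : rel V) : Prop :=
  connected_graph e /\
  forall c1 c2 : seq V, is_graph_cycle e c1 -> is_graph_cycle e c2 ->
    cycle_edges c1 != cycle_edges c2 ->
    [disjoint cycle_edges c1 & cycle_edges c2].

(* Great shadow S(G): vertices inl v (original) and inr v (shadow v').
   v' is adjacent to v and to all neighbours of v; no other new edges. *)
Definition great_shadow (V : finType) (e : rel V) : rel (V + V) :=
  fun a b =>
    match a, b with
    | inl u, inl v => e u v
    | inl u, inr v => (u == v) || e v u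
    | inr u, inl v => (u == v) || e u v
    | inr _, inr _ => false
    end.

Local Open Scope R_scope.

Definition in01 (t : R) : Prop := 0 <= t <= 1.
Definition in01o (t : R) : Prop := 0 < t < 1.

Definition cont01 (f : R -> R * R) : Prop :=
  forall t, in01 t -> forall eps, 0 < eps -> exists delta, 0 < delta /\
    forall s, in01 s -> Rabs (s - t) < delta ->
      Rabs (fst (f s) - fst (f t)) < eps /\ Rabs (snd (f s) - snd (f t)) < eps.

Definition arc01 (f : R -> R * R) : Prop :=
  cont01 f /\ forall s t, in01 s -> in01 t -> f s = f t -> s = t.

Definition planar_drawing (V : finType) (r : rel V)
    (pos : V -> R * R) (arc : V -> V -> R -> R * R) : Prop :=
  injective pos /\
  (forall u v, r u v ->
     arc01 (arc u v) /\ arc u v 0 = pos u /\ arc u v 1 = pos v /\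
     forall t w, in01o t -> arc u v t <> pos w) /\
  (forall u v u' v', r u v -> r u' v' -> [set u; v] != [set u'; v'] ->
     forall s t, in01o s -> in01o t -> arc u v s <> arc u' v' t).

Definition planar (V : finType) (r : rel V) : Prop :=
  exists pos arc, @planar_drawing V r pos arc.

From Stdlib Require Import Reals Lra.
From mathcomp Require Import all_boot.

Set Implicit Arguments.
Unset Strict Implicit.
Unset Printing Implicit Defensive.

(* All drawings are straight-line drawings, and every connected vertex set X
   of the cactus is drawn in one of two normal forms, by induction on |X|.
   A rooted drawing puts the rung r r' of a chosen vertex r on the unit base
   segment and everything else in the triangle above it, but outside a flat
   triangle of height h; another rooted drawing with the same root, squeezed
   vertically by h, fits into that empty space, which glues drawings at a cut
   vertex.  A two-terminal drawing puts a, a', b, b' at fixed corners of a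
   quadrilateral containing everything else; it draws the part inside X of a
   cycle through a and b.  Both forms are assembled from affine images of
   smaller ones and a few explicit edges.  Closing a cycle at r needs the
   corners of the "same colour" form, and the colour of b relative to a is
   the parity of the path between them: this is where bipartiteness is used.
   The cactus property enters only through two facts: a vertex outside a
   connected set has at most two neighbours in it, and a vertex lying on a
   cycle through the rest of the graph has a single neighbour in the
   component of that rest. *)

Local Open Scope R_scope.

Definition point := (R * R)%type.

Definition seg (P Q : point) (t : R) : point :=
  (fst P + t * (fst Q - fst P), snd P + t * (snd Q - snd P)).

Lemma seg_rev P Q t : seg P Q t = seg Q P (1 - t).
Proof. by rewrite /seg; f_equal; ring. Qed.

Lemma seg0 P Q : seg P Q 0 = P.
Proof. by case: P => x y; rewrite /seg /=; f_equal; ring. Qed.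

Lemma seg1 P Q : seg P Q 1 = Q.
Proof. by case: Q => x y; rewrite /seg /=; f_equal; ring. Qed.

Lemma seg_inj P Q s t : P <> Q -> seg P Q s = seg P Q t -> s = t.
Proof.
case: P Q => [x1 y1] [x2 y2] PQ; rewrite /seg /= => -[Ex Ey].
have [dx|dx] := Req_dec x1 x2.
- have [dy|dy] := Req_dec y1 y2; first by case: PQ; rewrite dx dy.
  have : (s - t) * (y2 - y1) = 0 by lra.
  by case/Rmult_integral; lra.
- have : (s - t) * (x2 - x1) = 0 by lra.
  by case/Rmult_integral; lra.
Qed.

Lemma cont01_seg P Q : cont01 (seg P Q).
Proof.
move=> t _ eps eps_gt0.
set k := Rabs (fst Q - fst P) + Rabs (snd Q - snd P) + 1.
have k_gt0 : 0 < k.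
  by rewrite /k; have := Rabs_pos (fst Q - fst P); have := Rabs_pos (snd Q - snd P); lra.
exists (eps / k); split; first exact: Rdiv_lt_0_compat.
move=> s _ st_small.
have scale a z : Rabs a <= k -> Rabs (z + s * a - (z + t * a)) < eps.
  move=> a_le; have -> : z + s * a - (z + t * a) = (s - t) * a by ring.
  rewrite Rabs_mult; apply: (Rle_lt_trans _ (Rabs (s - t) * k)).
    exact: Rmult_le_compat_l (Rabs_pos _) a_le.
  have -> : eps = eps / k * k by field; lra.
  exact: Rmult_lt_compat_r.
have := Rabs_pos (fst Q - fst P); have := Rabs_pos (snd Q - snd P).
by split; apply: scale; rewrite /k; lra.
Qed.

Definition affine (a b c d x0 y0 : R) (z : point) : point :=
  (a * fst z + b * snd z + x0, c * fst z + d * snd z + y0).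

Lemma affine_seg a b c d x0 y0 P Q t :
  affine a b c d x0 y0 (seg P Q t) =
  seg (affine a b c d x0 y0 P) (affine a b c d x0 y0 Q) t.
Proof. by rewrite /affine /seg /=; f_equal; ring. Qed.

Lemma affine_inj a b c d x0 y0 : a * d - b * c <> 0 ->
  injective (affine a b c d x0 y0).
Proof.
move=> det [x1 y1] [x2 y2]; rewrite /affine /= => -[E1 E2].
have Ex : (a * d - b * c) * (x1 - x2) = 0.
  have -> : (a * d - b * c) * (x1 - x2) =
    d * (a * x1 + b * y1 + x0 - (a * x2 + b * y2 + x0))
    - b * (c * x1 + d * y1 + y0 - (c * x2 + d * y2 + y0)) by ring.
  rewrite E1 E2; ring.
have Ey : (a * d - b * c) * (y1 - y2) = 0.
  have -> : (a * d - b * c) * (y1 - y2) =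
    a * (c * x1 + d * y1 + y0 - (c * x2 + d * y2 + y0))
    - c * (a * x1 + b * y1 + x0 - (a * x2 + b * y2 + x0)) by ring.
  rewrite E1 E2; ring.
by case/Rmult_integral: Ex => // ?; case/Rmult_integral: Ey => // ?; f_equal; lra.
Qed.

Definition image_region (f : point -> point) (A : point -> Prop) (z : point) : Prop :=
  exists2 z0, A z0 & z = f z0.

Definition orig (V : Type) (w : V + V) : V := match w with inl v | inr v => v end.

Section StraightLineDrawings.
Variables (V : finType) (e : rel V).
Hypotheses (e_sym : symmetric e) (e_irr : irreflexive e).

Local Notation W := (V + V)%type.
Local Notation sE := (great_shadow e).

Lemma great_shadow_sym : symmetric sE.
Proof. by case=> u [] w //=; rewrite eq_sym. Qed.

Lemma great_shadow_irr : irreflexive sE.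
Proof. by case=> w //=; rewrite ?e_irr ?eqxx. Qed.

Lemma great_shadow_orig (u w : W) :
  sE u w -> orig u = orig w \/ e (orig u) (orig w).
Proof.
case: u w => u [] w //=; try by right.
- by case/orP => [/eqP ->|]; [left|rewrite e_sym; right].
- by case/orP => [/eqP ->|]; [left|right].
Qed.

Record planar_on (X : {set V}) (p : W -> point) : Prop := PlanarOn {
  planar_on_inj : forall u w, orig u \in X -> orig w \in X -> p u = p w -> u = w;
  planar_on_vertex : forall u w z t,
    orig u \in X -> orig w \in X -> orig z \in X -> sE u w -> 0 < t < 1 ->
    seg (p u) (p w) t <> p z;
  planar_on_edge : forall u w u' w' s t,
    orig u \in X -> orig w \in X -> orig u' \in X -> orig w' \in X ->
    sE u w -> sE u' w' -> [set u; w] != [set u'; w'] -> 0 < s < 1 -> 0 < t < 1 ->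
    seg (p u) (p w) s <> seg (p u') (p w') t }.

Record drawn_in (X : {set V}) (p : W -> point) (A : point -> Prop) : Prop := DrawnIn {
  drawn_in_vertex : forall w, orig w \in X -> A (p w);
  drawn_in_edge : forall u w t, orig u \in X -> orig w \in X -> sE u w -> 0 < t < 1 ->
    A (seg (p u) (p w) t) }.

Lemma planar_drawing_of_planar_on (p : W -> point) :
  planar_on setT p -> planar_drawing sE p (fun u v => seg (p u) (p v)).
Proof.
case=> inj_p vtx_p edge_p; split; last split.
- by move=> u w; apply: inj_p; rewrite in_setT.
- move=> u w uw; split; [split|split; [|split]].
  + exact: cont01_seg.
  + move=> s t _ _; apply: seg_inj => puw.
    by move: uw; rewrite (inj_p u w) ?in_setT // great_shadow_irr.
  + exact: seg0.
  + exact: seg1.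
  + by move=> t z t01; apply: vtx_p; rewrite ?in_setT.
- by move=> u w u' w' *; apply: edge_p; rewrite ?in_setT.
Qed.

Section Transport.
Variables (X : {set V}) (p q : W -> point).
Hypothesis pq : forall w, orig w \in X -> p w = q w.

Lemma eq_planar_on : planar_on X p -> planar_on X q.
Proof.
case=> inj_p vtx_p edge_p; split.
- by move=> u w Xu Xw; rewrite -!pq //; apply: inj_p.
- by move=> u w z t Xu Xw Xz; rewrite -!pq //; apply: vtx_p.
- by move=> u w u' w' s t Xu Xw Xu' Xw'; rewrite -!pq //; apply: edge_p.
Qed.

Lemma eq_drawn_in A : drawn_in X p A -> drawn_in X q A.
Proof.
case=> vtx_p edge_p; split.
- by move=> w Xw; rewrite -pq //; apply: vtx_p.
- by move=> u w t Xu Xw; rewrite -!pq //; apply: edge_p.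
Qed.

End Transport.

Lemma drawn_in_sub (X : {set V}) p (A B : point -> Prop) :
  (forall z, A z -> B z) -> drawn_in X p A -> drawn_in X p B.
Proof. by move=> AB [vtx_p edge_p]; split=> *; apply: AB; auto. Qed.

Lemma planar_on_affine {a b c d x0 y0 : R} (X : {set V}) p : a * d - b * c <> 0 ->
  planar_on X p -> planar_on X (affine a b c d x0 y0 \o p).
Proof.
move=> det [inj_p vtx_p edge_p]; split=> /=.
- by move=> u w Xu Xw /(affine_inj det); apply: inj_p.
- move=> u w z t Xu Xw Xz uw t01; rewrite -affine_seg => /(affine_inj det).
  exact: vtx_p.
- move=> u w u' w' s t Xu Xw Xu' Xw' uw uw' neq s01 t01.
  rewrite -!affine_seg => /(affine_inj det); exact: edge_p.
Qed.

Lemma drawn_in_affine {a b c d x0 y0 : R} (X : {set V}) p A :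
  drawn_in X p A -> drawn_in X (affine a b c d x0 y0 \o p) (image_region (affine a b c d x0 y0) A).
Proof.
case=> vtx_p edge_p; split=> /=.
- by move=> w Xw; exists (p w); auto.
- by move=> u w t Xu Xw uw t01; rewrite -affine_seg; exists (seg (p u) (p w) t); auto.
Qed.

Section Union.
Variables (X1 X2 : {set V}) (p : W -> point) (A B C : point -> Prop).
Hypotheses (planar1 : planar_on X1 p) (planar2 : planar_on X2 p).
Hypotheses (in1 : drawn_in X1 p A) (in2 : drawn_in X2 p B).
Hypotheses (AB : forall z, A z -> B z -> False) (CA : forall z, C z -> A z -> False)
  (CB : forall z, C z -> B z -> False).
Hypothesis cross_in : forall u w t, orig u \in X1 -> orig w \in X2 -> sE u w -> 0 < t < 1 ->
  C (seg (p u) (p w) t).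
Hypothesis cross_disjoint : forall u w u' w' s t,
  orig u \in X1 -> orig w \in X2 -> orig u' \in X1 -> orig w' \in X2 ->
  sE u w -> sE u' w' -> (u, w) <> (u', w') -> 0 < s < 1 -> 0 < t < 1 ->
  seg (p u) (p w) s <> seg (p u') (p w') t.

Local Notation X := (X1 :|: X2).

Let edge_cases u w t : orig u \in X -> orig w \in X -> sE u w -> 0 < t < 1 ->
  [\/ orig u \in X1 /\ orig w \in X1, orig u \in X2 /\ orig w \in X2
    | exists u0 w0 t0, [/\ orig u0 \in X1, orig w0 \in X2, sE u0 w0, 0 < t0 < 1 &
        seg (p u) (p w) t = seg (p u0) (p w0) t0 /\ [set u; w] = [set u0; w0]]].
Proof.
rewrite !inE => /orP[Xu|Xu] /orP[Xw|Xw] uw t01; [by constructor 1| | |by constructor 2].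
- by constructor 3; exists u, w, t.
- constructor 3; exists w, u, (1 - t); split=> //; first by rewrite great_shadow_sym.
  + lra.
  + by split; [apply: seg_rev|apply: setUC].
Qed.

Let vertex_cases w : orig w \in X -> (orig w \in X1 /\ A (p w)) \/ (orig w \in X2 /\ B (p w)).
Proof. by rewrite inE => /orP[Xw|Xw]; [left|right]; split=> //;
  [exact: (drawn_in_vertex in1)|exact: (drawn_in_vertex in2)].
Qed.

Let edge_regions u w t : orig u \in X -> orig w \in X -> sE u w -> 0 < t < 1 ->
  [\/ [/\ orig u \in X1, orig w \in X1 & A (seg (p u) (p w) t)],
      [/\ orig u \in X2, orig w \in X2 & B (seg (p u) (p w) t)]
    | C (seg (p u) (p w) t)].
Proof.
move=> Xu Xw uw t01.
case: (edge_cases Xu Xw uw t01) => [[X1u X1w]|[X2u X2w]|[u0 [w0 [t0 [? ? ? ? [-> _]]]]]].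
- by constructor 1; split=> //; exact: (drawn_in_edge in1).
- by constructor 2; split=> //; exact: (drawn_in_edge in2).
- by constructor 3; apply: cross_in.
Qed.

Lemma planar_on_union : planar_on X p.
Proof.
split.
- move=> u w Xu Xw puw.
  case: (vertex_cases Xu) (vertex_cases Xw) => [[X1u Au]|[X2u Bu]] [[X1w Aw]|[X2w Bw]].
  + exact: planar_on_inj planar1 _ _ X1u X1w puw.
  + by case: (AB Au); rewrite puw.
  + by case: (AB Aw); rewrite -puw.
  + exact: planar_on_inj planar2 _ _ X2u X2w puw.
- move=> u w z t Xu Xw Xz uw t01 Ez.
  case: (edge_regions Xu Xw uw t01) (vertex_cases Xz)
    => [[X1u X1w R]|[X2u X2w R]|R] [[X1z Rz]|[X2z Rz]]; rewrite Ez in R.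
  + exact: planar_on_vertex planar1 _ _ _ _ X1u X1w X1z uw t01 Ez.
  + exact: AB R Rz.
  + exact: AB Rz R.
  + exact: planar_on_vertex planar2 _ _ _ _ X2u X2w X2z uw t01 Ez.
  + exact: CA R Rz.
  + exact: CB R Rz.
- move=> u w u' w' s t Xu Xw Xu' Xw' uw uw' neq s01 t01 E.
  have [[X1u X1w]|[X2u X2w]|[u0 [w0 [s0 [X1u0 X2w0 uw0 s01' [E0 set0]]]]]] :=
    edge_cases Xu Xw uw s01;
  have [[X1u' X1w']|[X2u' X2w']|[u1 [w1 [t1 [X1u1 X2w1 uw1 t01' [E1 set1]]]]]] :=
    edge_cases Xu' Xw' uw' t01.
  + exact: planar_on_edge planar1 _ _ _ _ _ _ X1u X1w X1u' X1w' uw uw' neq s01 t01 E.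
  + by apply: AB (drawn_in_edge in1 X1u X1w uw s01) _; rewrite E; exact: (drawn_in_edge in2).
  + by apply: CA (drawn_in_edge in1 X1u X1w uw s01); rewrite E E1; apply: cross_in.
  + by apply: AB (drawn_in_edge in1 X1u' X1w' uw' t01) _; rewrite -E; exact: (drawn_in_edge in2).
  + exact: planar_on_edge planar2 _ _ _ _ _ _ X2u X2w X2u' X2w' uw uw' neq s01 t01 E.
  + by apply: CB (drawn_in_edge in2 X2u X2w uw s01); rewrite E E1; apply: cross_in.
  + by apply: CA (drawn_in_edge in1 X1u' X1w' uw' t01); rewrite -E E0; apply: cross_in.
  + by apply: CB (drawn_in_edge in2 X2u' X2w' uw' t01); rewrite -E E0; apply: cross_in.
  + apply: (cross_disjoint X1u0 X2w0 X1u1 X2w1 uw0 uw1 _ s01' t01'); last by rewrite -E0 -E1.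
    by case=> eu ew; move: neq; rewrite set0 set1 eu ew eqxx.
Qed.

Lemma drawn_in_union : drawn_in X p (fun z => A z \/ B z \/ C z).
Proof.
split; first by move=> w /vertex_cases [[_ ?]|[_ ?]]; auto.
by move=> u w t Xu Xw uw t01; case: (edge_regions Xu Xw uw t01) => [[_ _ ?]|[_ _ ?]|?]; auto.
Qed.

End Union.

Record drawn_off_rung (r : V) (Y : {set V}) (p : W -> point) (A : point -> Prop) : Prop :=
  DrawnOffRung {
  off_rung_vertex : forall w, orig w \in Y -> orig w <> r -> A (p w);
  off_rung_edge : forall u w t, orig u \in Y -> orig w \in Y -> sE u w ->
    ~ (orig u = r /\ orig w = r) -> 0 < t < 1 -> A (seg (p u) (p w) t) }.

Section CutVertex.
Variables (X1 X2 : {set V}) (r : V).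
Hypotheses (r1 : r \in X1) (r2 : r \in X2).
Hypothesis meet : forall x, x \in X1 -> x \in X2 -> x = r.
Hypothesis no_cross : forall x y, x \in X1 -> y \in X2 -> x <> r -> y <> r -> ~~ e x y.

Local Notation X := (X1 :|: X2).

Let outside1 x : x \in X -> x \notin X1 -> x \in X2 /\ x <> r.
Proof. by rewrite inE => /orP[->//|X2x] X1x; split=> // xr; rewrite xr r1 in X1x. Qed.

Lemma cut_vertex_cases (w : W) :
  orig w \in X -> orig w \in X1 \/ orig w \in X2 /\ orig w <> r.
Proof. by move=> Xw; case: (boolP (orig w \in X1)) => X1w; [left|right; apply: outside1]. Qed.

Lemma cut_edge_cases (u w : W) : orig u \in X -> orig w \in X -> sE u w ->
  orig u \in X1 /\ orig w \in X1 \/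
  [/\ orig u \in X2, orig w \in X2 & ~ (orig u = r /\ orig w = r)].
Proof.
have cross x y : x \in X1 -> y \in X2 -> y <> r -> x = y \/ e x y -> x = r.
  move=> X1x X2y yr [xy|xy]; first by rewrite -xy in yr; case: yr; apply: meet; rewrite // xy.
  by apply/eqP; apply: contraTT xy => /eqP xr; apply: no_cross.
move=> Xu Xw uw; have := great_shadow_orig uw.
case: (boolP (orig u \in X1)) (boolP (orig w \in X1)) => [X1u|X1u] [X1w|X1w] uw'.
- by left.
- have [X2w wr] := outside1 Xw X1w; right.
  by split=> //; [rewrite (cross _ _ X1u X2w wr uw')|case].
- have [X2u ur] := outside1 Xu X1u; right.
  have wu : orig w = orig u \/ e (orig w) (orig u).
    by case: uw' => [->|]; [left|rewrite e_sym; right].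
  by split=> //; [rewrite (cross _ _ X1w X2u ur wu)|case].
- have [X2u ur] := outside1 Xu X1u; have [X2w _] := outside1 Xw X1w.
  by right; split=> //; case.
Qed.

Lemma planar_on_union_cut p (A B : point -> Prop) :
  planar_on X1 p -> planar_on X2 p -> drawn_in X1 p A -> drawn_off_rung r X2 p B ->
  (forall z, A z -> B z -> False) -> planar_on X p.
Proof.
move=> planar1 planar2 in1 in2 AB.
have A_B u w u' w' s t : orig u \in X1 -> orig w \in X1 -> sE u w -> 0 < s < 1 ->
    orig u' \in X2 -> orig w' \in X2 -> sE u' w' -> ~ (orig u' = r /\ orig w' = r) ->
    0 < t < 1 -> seg (p u) (p w) s <> seg (p u') (p w') t.
  move=> X1u X1w uw s01 X2u' X2w' uw' nr t01 E.
  by apply: AB (drawn_in_edge in1 X1u X1w uw s01) _; rewrite E; exact: (off_rung_edge in2).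
split.
- move=> u w Xu Xw puw.
  case: (cut_vertex_cases Xu) (cut_vertex_cases Xw) => [X1u|[X2u ur]] [X1w|[X2w wr]].
  + exact: planar_on_inj planar1 _ _ X1u X1w puw.
  + by exfalso; apply: (AB _ (drawn_in_vertex in1 X1u)); rewrite puw; exact: (off_rung_vertex in2).
  + by exfalso; apply: (AB _ (drawn_in_vertex in1 X1w)); rewrite -puw; exact: (off_rung_vertex in2).
  + exact: planar_on_inj planar2 _ _ X2u X2w puw.
- move=> u w z t Xu Xw Xz uw t01 E.
  case: (cut_edge_cases Xu Xw uw) (cut_vertex_cases Xz)
    => [[X1u X1w]|[X2u X2w nr]] [X1z|[X2z zr]].
  + exact: planar_on_vertex planar1 _ _ _ _ X1u X1w X1z uw t01 E.
  + by apply: AB (drawn_in_edge in1 X1u X1w uw t01) _; rewrite E; exact: (off_rung_vertex in2).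
  + by apply: AB (drawn_in_vertex in1 X1z) _; rewrite -E; exact: (off_rung_edge in2).
  + exact: planar_on_vertex planar2 _ _ _ _ X2u X2w X2z uw t01 E.
- move=> u w u' w' s t Xu Xw Xu' Xw' uw uw' neq s01 t01 E.
  case: (cut_edge_cases Xu Xw uw) (cut_edge_cases Xu' Xw' uw')
    => [[X1u X1w]|[X2u X2w nr]] [[X1u' X1w']|[X2u' X2w' nr']].
  + exact: planar_on_edge planar1 _ _ _ _ _ _ X1u X1w X1u' X1w' uw uw' neq s01 t01 E.
  + exact: A_B X1u X1w uw s01 X2u' X2w' uw' nr' t01 E.
  + exact: A_B X1u' X1w' uw' t01 X2u X2w uw nr s01 (esym E).
  + exact: planar_on_edge planar2 _ _ _ _ _ _ X2u X2w X2u' X2w' uw uw' neq s01 t01 E.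
Qed.

End CutVertex.

End StraightLineDrawings.

Definition triangle (z : point) : Prop :=
  0 < snd z /\ snd z < 2 * fst z /\ snd z < 2 - 2 * fst z.
Definition base_segment (z : point) : Prop := snd z = 0 /\ 0 <= fst z <= 1.
Definition flat_triangle (h : R) (z : point) : Prop :=
  0 < snd z /\ snd z < 2 * h * fst z /\ snd z < 2 * h * (1 - fst z).
Definition rim (h : R) (z : point) : Prop :=
  triangle z /\ (snd z > 2 * h * fst z \/ snd z > 2 * h * (1 - fst z)).
Definition squeeze (h : R) : point -> point := affine 1 0 0 h 0 0.

Lemma rim_triangle h z : rim h z -> triangle z.
Proof. by case. Qed.

Lemma rim_flat h z : rim h z -> flat_triangle h z -> False.
Proof. by case: z => x y; rewrite /rim /flat_triangle /triangle /=; lra. Qed.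

Lemma base_flat h z : base_segment z -> flat_triangle h z -> False.
Proof. by case: z => x y; rewrite /base_segment /flat_triangle /=; lra. Qed.

Lemma base_triangle z : base_segment z -> triangle z -> False.
Proof. by case: z => x y; rewrite /base_segment /triangle /=; lra. Qed.

Lemma rim_mul h1 h2 z : 0 < h1 < 1 -> 0 < h2 < 1 -> rim h1 z -> rim (h1 * h2) z.
Proof.
case: z => x y; rewrite /rim /triangle /= => h1_01 h2_01 [[y_gt0 [yx yx']] above].
by split=> //; case: above => ?; [left|right]; nra.
Qed.

Lemma squeeze_rim h1 h2 z : 0 < h1 < 1 -> 0 < h2 < 1 -> rim h2 z ->
  rim (h1 * h2) (squeeze h1 z) /\ flat_triangle h1 (squeeze h1 z).
Proof.
case: z => x y; rewrite /rim /triangle /flat_triangle /squeeze /affine /=.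
move=> h1_01 h2_01 [[y_gt0 [yx yx']] above].
have x_gt0 : 0 < x by lra.
have x_lt1 : 0 < 1 - x by lra.
split; [split; [split; [|split]|case: above => ?; [left|right]]|split; [|split]]; nra.
Qed.

Section NormalForms.
Variables (V : finType) (e : rel V).
Hypotheses (e_sym : symmetric e) (e_irr : irreflexive e).

Local Notation W := (V + V)%type.
Local Notation sE := (great_shadow e).
Local Notation planar_on := (planar_on e).
Local Notation drawn_in := (drawn_in e).
Local Notation drawn_off_rung := (drawn_off_rung e).

(* Apart from the rung, the drawing avoids the flat triangle of height [h]
   over the base, leaving room for a squeezed copy of another rooted drawing. *)
Record rooted_form (X : {set V}) (r : V) (p : W -> point) : Prop := RootedForm {
  rooted_root : p (inl r) = (0, 0);
  rooted_shadow : p (inr r) = (1, 0);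
  rooted_rim : exists2 h, 0 < h < 1 & drawn_off_rung r X p (rim h) }.

Definition quad_same (z : point) : Prop :=
  0 <= fst z <= 1 /\ snd z >= 2/5 - 2/5 * fst z /\ snd z <= 3/5 + 2/5 * fst z.
Definition quad_diff (z : point) : Prop :=
  0 <= fst z <= 1 /\ snd z >= 2/5 * fst z /\ snd z <= 1 - 2/5 * fst z.
Definition quad (same : bool) : point -> Prop := if same then quad_same else quad_diff.

(* [same] records whether the terminals [a] and [b] have the same colour. *)
Record terminal_form (same : bool) (Y : {set V}) (a b : V) (p : W -> point) : Prop :=
  TerminalForm {
  terminal_a : p (inl a) = if same then (1, 0) else (1, 2/5);
  terminal_a' : p (inr a) = if same then (0, 2/5) else (0, 0);
  terminal_b : p (inl b) = if same then (1, 1) else (0, 1);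
  terminal_b' : p (inr b) = if same then (0, 3/5) else (1, 3/5);
  terminal_in : drawn_in Y p (quad same) }.

Lemma rung_edge (u w : W) r : orig u = r -> orig w = r -> sE u w ->
  u = inl r /\ w = inr r \/ u = inr r /\ w = inl r.
Proof.
case: u => x /= ->; case: w => y /= ->; rewrite /= ?e_irr ?eqxx //.
- by left.
- by right.
Qed.

Lemma rung_base (p : W -> point) r u w t :
  p (inl r) = (0, 0) -> p (inr r) = (1, 0) -> orig u = r -> orig w = r -> sE u w ->
  0 < t < 1 -> snd (seg (p u) (p w) t) = 0 /\ 0 < fst (seg (p u) (p w) t) < 1.
Proof.
move=> pr pr' ur wr uw t01.
by case: (rung_edge ur wr uw) => -[-> ->]; rewrite pr pr' /seg /=; split; [ring|lra|ring|lra].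
Qed.

Definition join_on (H : {set V}) (q1 q2 : W -> point) (w : W) : point :=
  if orig w \in H then q1 w else q2 w.

Lemma drawn_in_off_rung X r p A : p (inl r) = (0, 0) -> p (inr r) = (1, 0) ->
  drawn_off_rung r X p A -> drawn_in X p (fun z => A z \/ base_segment z).
Proof.
move=> pr pr' [A_vertex A_edge]; split.
- move=> w Xw; case: (eqVneq (orig w) r) => wr; last by left; apply: A_vertex (elimN eqP wr).
  by right; case: w {Xw} wr => x /= ->; rewrite ?pr ?pr' /base_segment /=; lra.
- move=> u w t Xu Xw uw t01.
  case: (eqVneq (orig u) r) (eqVneq (orig w) r) => [ur|ur] [wr|wr].
  + by right; have := rung_base pr pr' ur wr uw t01; rewrite /base_segment; lra.
  all: left; apply: A_edge => //.
  all: by case=> u_r w_r; rewrite ?u_r ?w_r eqxx in ur wr.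
Qed.

Lemma rooted_form_drawn_in X r p :
  rooted_form X r p -> drawn_in X p (fun z => triangle z \/ base_segment z).
Proof.
case=> pr pr' [h _ /(drawn_in_off_rung pr pr')]; apply: drawn_in_sub => z.
by case=> [/rim_triangle|]; [left|right].
Qed.

Lemma single_rung p r : p (inl r) = (0, 0) -> p (inr r) = (1, 0) ->
  [/\ planar_on [set r] p, drawn_in [set r] p base_segment & rooted_form [set r] r p].
Proof.
move=> pr pr'.
have at_r (w : W) : orig w \in [set r] -> orig w = r by rewrite inE => /eqP.
have off A : drawn_off_rung r [set r] p A.
  by split=> [w /at_r|u w t /at_r ur /at_r wr _ []].
have on_base := drawn_in_off_rung pr pr' (off (fun=> False)).
split; last by split=> //; exists (1/2); [lra|apply: off].
- split.
  + move=> u w /at_r ur /at_r wr; case: u w ur wr => x [] y /= -> ->;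
      rewrite ?pr ?pr' // => /pair_equal_spec[]; lra.
  + move=> u w z t /at_r ur /at_r wr /at_r zr uw t01 E.
    have := rung_base pr pr' ur wr uw t01; rewrite E.
    by case: z {E} zr => x /= ->; rewrite ?pr ?pr' /=; lra.
  + move=> u w u' w' s t /at_r ur /at_r wr /at_r u'r /at_r w'r uw uw'.
    case: (rung_edge ur wr uw) => -[-> ->]; case: (rung_edge u'r w'r uw') => -[-> ->];
      by rewrite ?eqxx // setUC eqxx.
- by apply: drawn_in_sub on_base => z [].
Qed.

Lemma rooted_form_glue (X1 X2 : {set V}) r p1 p2 :
  r \in X1 -> r \in X2 -> (forall x, x \in X1 -> x \in X2 -> x = r) ->
  (forall x y, x \in X1 -> y \in X2 -> x <> r -> y <> r -> ~~ e x y) ->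
  planar_on X1 p1 -> rooted_form X1 r p1 -> planar_on X2 p2 -> rooted_form X2 r p2 ->
  exists p, planar_on (X1 :|: X2) p /\ rooted_form (X1 :|: X2) r p.
Proof.
move=> r1 r2 meet no_cross planar1 [pr1 pr1' [h1 h1_01 off1]] planar2 [pr2 pr2' [h2 h2_01 off2]].
pose p := join_on X1 p1 (squeeze h1 \o p2).
have p_1 w : orig w \in X1 -> p w = p1 w by rewrite /p /join_on => ->.
have p_2 w : orig w \in X2 -> p w = squeeze h1 (p2 w).
  rewrite /p /join_on; case: ifP => // X1w X2w; have := meet _ X1w X2w.
  by case: w {X1w X2w} => x /= ->; rewrite ?pr1 ?pr1' ?pr2 ?pr2' /squeeze /affine /=;
    f_equal; ring.
have h12_01 : 0 < h1 * h2 < 1 by split; nra.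
have in1 : drawn_in X1 p (fun z => rim h1 z \/ base_segment z).
  by apply: (eq_drawn_in _ (drawn_in_off_rung pr1 pr1' off1)) => w /p_1.
have in2 : drawn_off_rung r X2 p (fun z => rim (h1 * h2) z /\ flat_triangle h1 z).
  case: off2 => vtx2 edge2; split.
  + by move=> w X2w wr; rewrite p_2 //; apply: squeeze_rim; auto.
  + move=> u w t X2u X2w uw nr t01; rewrite !p_2 // /squeeze -affine_seg.
    by apply: squeeze_rim; auto.
have planar : planar_on (X1 :|: X2) p.
  have det : 1 * h1 - 0 * 0 <> 0 by lra.
  apply: (planar_on_union_cut e_sym r1 r2 meet no_cross
    (eq_planar_on (fun w X1w => esym (p_1 w X1w)) planar1)
    (eq_planar_on (fun w X2w => esym (p_2 w X2w)) (planar_on_affine det planar2)) in1 in2).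
  by move=> z [/rim_flat|/base_flat] flat_free [_ /flat_free].
exists p; split=> //; split; rewrite ?p_1 //; exists (h1 * h2) => //.
case: off1 in2 => vtx1 edge1 [vtx2 edge2]; split.
- move=> w Xw wr; case: (cut_vertex_cases r1 Xw) => [X1w|[X2w _]].
  + by rewrite p_1 //; apply: rim_mul; auto.
  + by case: (vtx2 _ X2w wr).
- move=> u w t Xu Xw uw nr t01.
  case: (cut_edge_cases e_sym r1 r2 meet no_cross Xu Xw uw) => [[X1u X1w]|[X2u X2w _]].
  + by rewrite !p_1 //; apply: rim_mul; auto.
  + by case: (edge2 _ _ _ X2u X2w uw nr t01).
Qed.

Lemma rooted_form_attach (D : {set V}) r p h (B : point -> Prop) :
  0 < h < 1 -> p (inl r) = (0, 0) -> p (inr r) = (1, 0) ->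
  planar_on D p -> drawn_in D p B -> (forall z, B z -> rim h z) ->
  (forall u w t, orig u = r -> orig w \in D -> sE u w -> 0 < t < 1 ->
     rim h (seg (p u) (p w) t) /\ ~ B (seg (p u) (p w) t)) ->
  (forall u w u' w' s t, orig u = r -> orig w \in D -> orig u' = r -> orig w' \in D ->
     sE u w -> sE u' w' -> (u, w) <> (u', w') -> 0 < s < 1 -> 0 < t < 1 ->
     seg (p u) (p w) s <> seg (p u') (p w') t) ->
  planar_on (r |: D) p /\ rooted_form (r |: D) r p.
Proof.
move=> h_01 pr pr' planarD inD B_rim cross_rim cross_disjoint.
have [planar_r in_r _] := single_rung pr pr'.
have at_r (w : W) : orig w \in [set r] -> orig w = r by rewrite inE => /eqP.
have planar : planar_on (r |: D) p.
  apply: (planar_on_union e_sym planar_r planarD in_r inD (C := fun z => rim h z /\ ~ B z)).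
  - by move=> z zb /B_rim /rim_triangle; apply: base_triangle zb.
  - by move=> z [/rim_triangle zt _] /base_triangle; apply.
  - by move=> z [_].
  - by move=> u w t /at_r; apply: cross_rim.
  - by move=> u w u' w' s t /at_r ur Dw /at_r; apply: cross_disjoint.
split=> //; split=> //; exists h => //; split.
- move=> w; rewrite !inE => /orP[/eqP //|Dw] _; exact: B_rim (drawn_in_vertex inD Dw).
- move=> u w t; rewrite !inE => /orP[/eqP ur|Du] /orP[/eqP wr|Dw] uw nr t01.
  + by case: nr.
  + exact: (cross_rim _ _ _ ur Dw uw t01).1.
  + rewrite seg_rev; apply: (cross_rim _ _ _ wr Du _ _).1; [by rewrite great_shadow_sym|lra].
  + exact: B_rim (drawn_in_edge inD Du Dw uw t01).
Qed.

Definition bridge_edges (a c : V) : seq (W * W) :=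
  [:: (inl a, inl c); (inl a, inr c); (inr a, inl c)].

Lemma bridge_edge_cases (H R : {set V}) a c (u w : W) :
  [disjoint H & R] -> (forall x y, x \in H -> y \in R -> e x y -> x = a /\ y = c) ->
  orig u \in H -> orig w \in R -> sE u w -> (u, w) \in bridge_edges a c.
Proof.
move=> /disjointFr HR only_ac; case: u w => x [] y /= Hx Ry;
  rewrite ?inE ?xpair_eqE ?orbF.
- by case/(only_ac _ _ Hx Ry) => -> ->; rewrite !eqxx.
- case/orP => [/eqP xy|]; first by rewrite -xy (HR _ Hx) in Ry.
  by rewrite e_sym => /(only_ac _ _ Hx Ry) [-> ->]; rewrite !eqxx orbT.
- case/orP => [/eqP xy|]; first by rewrite -xy (HR _ Hx) in Ry.
  by case/(only_ac _ _ Hx Ry) => -> ->; rewrite !eqxx !orbT.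
- by [].
Qed.

Section Bridge.
Variables (H R : {set V}) (a c : V) (q1 q2 : W -> point) (A B K : point -> Prop).
Hypothesis HR : [disjoint H & R].
Hypothesis only_ac : forall x y, x \in H -> y \in R -> e x y -> x = a /\ y = c.
Hypotheses (planar1 : planar_on H q1) (planar2 : planar_on R q2).
Hypotheses (in1 : drawn_in H q1 A) (in2 : drawn_in R q2 B).
Hypotheses (AB : forall z, A z -> B z -> False) (AK : forall z, A z -> K z)
  (BK : forall z, B z -> K z).
Hypothesis bridge_in : forall uw, uw \in bridge_edges a c -> forall t, 0 < t < 1 ->
  let z := seg (q1 uw.1) (q2 uw.2) t in K z /\ ~ A z /\ ~ B z.
Hypothesis bridge_disjoint : forall uw uw', uw \in bridge_edges a c ->
  uw' \in bridge_edges a c -> uw != uw' -> forall s t, 0 < s < 1 -> 0 < t < 1 ->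
  seg (q1 uw.1) (q2 uw.2) s <> seg (q1 uw'.1) (q2 uw'.2) t.

Local Notation q := (join_on H q1 q2).

Let q_1 w : orig w \in H -> q w = q1 w.
Proof. by rewrite /join_on => ->. Qed.

Let q_2 w : orig w \in R -> q w = q2 w.
Proof. by rewrite /join_on => Rw; rewrite (disjointFl HR Rw). Qed.

Let cross_edges u w t : orig u \in H -> orig w \in R -> sE u w -> 0 < t < 1 ->
  seg (q u) (q w) t = seg (q1 u) (q2 w) t /\ (u, w) \in bridge_edges a c.
Proof.
move=> Hu Rw uw _; rewrite q_1 // q_2 //; split=> //.
exact: bridge_edge_cases HR only_ac Hu Rw uw.
Qed.

Let C z := K z /\ ~ A z /\ ~ B z.

Let cross_in u w t : orig u \in H -> orig w \in R -> sE u w -> 0 < t < 1 ->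
  C (seg (q u) (q w) t).
Proof.
move=> Hu Rw uw t01; have [-> bridge_uw] := cross_edges Hu Rw uw t01.
exact: bridge_in bridge_uw t t01.
Qed.

Let inH : drawn_in H q A.
Proof. by apply: eq_drawn_in in1 => w /q_1. Qed.

Let inR : drawn_in R q B.
Proof. by apply: eq_drawn_in in2 => w /q_2. Qed.

Lemma bridge_join : planar_on (H :|: R) q /\ drawn_in (H :|: R) q K.
Proof.
split; last by apply: drawn_in_sub (drawn_in_union e_sym inH inR cross_in) => z [/AK|[/BK|[]]].
apply: (planar_on_union e_sym _ _ inH inR AB (C := C)).
- by apply: eq_planar_on planar1 => w /q_1.
- by apply: eq_planar_on planar2 => w /q_2.
- by move=> z [_ []].
- by move=> z [_ [_]].
- exact: cross_in.
- move=> u w u' w' s t Hu Rw Hu' Rw' uw uw' neq s01 t01.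
  have [-> bridge_uw] := cross_edges Hu Rw uw s01.
  have [-> bridge_uw'] := cross_edges Hu' Rw' uw' t01.
  by apply: bridge_disjoint bridge_uw bridge_uw' _ s t s01 t01; apply/eqP.
Qed.

End Bridge.

Definition with_rung (r : V) (q : W -> point) (w : W) : point :=
  if orig w == r then (if w is inl _ then (0, 0) else (1, 0)) else q w.

Lemma with_rung_root r q : with_rung r q (inl r) = (0, 0).
Proof. by rewrite /with_rung eqxx. Qed.

Lemma with_rung_shadow r q : with_rung r q (inr r) = (1, 0).
Proof. by rewrite /with_rung eqxx. Qed.

Lemma with_rung_off r (D : {set V}) q w : r \notin D -> orig w \in D -> with_rung r q w = q w.
Proof. by rewrite /with_rung => rD Dw; case: eqP => // wr; rewrite -wr Dw in rD. Qed.

Lemma root_edge_cases (D : {set V}) r (u w : W) : r \notin D ->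
  orig u = r -> orig w \in D -> sE u w ->
  e r (orig w) /\ (u, w) \in bridge_edges r (orig w).
Proof.
move=> rD ur Dw uw; have /orP[/eqP wr|ruw] : (orig w == r) || e r (orig w).
- by case: (great_shadow_orig e_sym uw) => [<-|]; rewrite ur ?eqxx // => ->; rewrite orbT.
- by rewrite -wr Dw in rD.
split=> //; rewrite -ur in rD ruw *.
apply: (bridge_edge_cases (H := [set orig u]) (R := [set orig w]) _ _ (set11 _) (set11 _) uw).
- by rewrite disjoints1 inE; apply: contraNneq rD => ->.
- by move=> x y /set1P -> /set1P ->.
Qed.

End NormalForms.

Definition frame_pendant := affine 0 (1/10) (1/4) (-1/40) (1/2) (1/2).
Definition frame_close := affine (1/4) 0 (1/4) (3/5) (1/4) (-1/20).
Definition frame_edge_root := affine (-1) (-1/2) (-2/5) (4/5) 1 (2/5).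
Definition frame_edge_rest := affine 1 (1/2) (-2/5) (-2/5) 0 1.
Definition frame_extend_root (same : bool) :=
  affine (-1) (-1/2) (if same then -2/5 else 2/5) (3/10) 1 (if same then 2/5 else 0).
Definition frame_extend_rest (same : bool) :=
  affine (-1) 0 (if same then 1/5 else -1/5) (1/2) 1 (if same then 3/10 else 1/2).

Ltac region_hyps :=
  repeat match goal with
  | z : point |- _ => destruct z
  | H : ex2 _ _ |- _ => destruct H
  | H : _ /\ _ |- _ => destruct H
  | H : (_, _) = (_, _) |- _ => injection H; clear H; intros
  end;
  simpl in *;
  repeat match goal with
  | H : (_, _) = (_, _) |- _ => injection H; clear H; intros
  end;
  repeat match goal with
  | H : _ \/ _ |- _ => destruct H
  end;
  try lra.

Ltac region_goal :=
  match goal with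
  | |- _ /\ _ => split; region_goal
  | |- _ \/ _ => first [left; region_goal | right; region_goal]
  | |- ~ _ => intro; region_hyps
  | _ => lra
  end.

Ltac region_lra :=
  unfold frame_pendant, frame_close, frame_edge_root, frame_edge_rest, frame_extend_root,
    frame_extend_rest, image_region, rim, quad, quad_same, quad_diff, triangle, flat_triangle,
    base_segment, seg, affine in *;
  simpl in *; region_hyps; region_goal.

Section Templates.
Variables (V : finType) (e : rel V).
Hypotheses (e_sym : symmetric e) (e_irr : irreflexive e).

Local Notation W := (V + V)%type.
Local Notation sE := (great_shadow e).
Local Notation planar_on := (planar_on e).
Local Notation drawn_in := (drawn_in e).
Local Notation rooted_form := (rooted_form e).
Local Notation terminal_form := (terminal_form e).

(* The rooted drawing of [D] at [c] goes inside the rim of height 1/4 over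
   the new rung of [r]. *)
Lemma rooted_form_pendant (D : {set V}) r c p1 :
  r \notin D -> c \in D -> (forall y, y \in D -> e r y -> y = c) ->
  planar_on D p1 -> rooted_form D c p1 ->
  exists p, planar_on (r |: D) p /\ rooted_form (r |: D) r p.
Proof.
move=> rD cD only_c planar1 form1; have [pc pc' _] := form1.
pose q := with_rung r (frame_pendant \o p1).
have q_D w : orig w \in D -> q w = frame_pendant (p1 w).
  by move=> Dw; rewrite /q (with_rung_off _ rD Dw).
have [qr qr'] : q (inl r) = (0, 0) /\ q (inr r) = (1, 0).
  by split; [apply: with_rung_root|apply: with_rung_shadow].
have [qc qc'] : q (inl c) = frame_pendant (0, 0) /\ q (inr c) = frame_pendant (1, 0).
  by rewrite !q_D // pc pc'.
have det : 0 * (-1/40) - (1/10) * (1/4) <> 0 by lra.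
have cross u w : orig u = r -> orig w \in D -> sE u w -> (u, w) \in bridge_edges r c.
  by move=> ur Dw uw; have [/(only_c _ Dw) <-] := root_edge_cases e_sym rD ur Dw uw.
exists q; apply: (rooted_form_attach e_sym e_irr (h := 1/4)
  (B := image_region frame_pendant (fun z => triangle z \/ base_segment z))) => //.
- lra.
- by apply: (eq_planar_on _ (planar_on_affine det planar1)) => w /q_D ->.
- by apply: (eq_drawn_in _ (drawn_in_affine (rooted_form_drawn_in e_irr form1))) => w /q_D ->.
- by move=> z zB; region_lra.
- move=> u w t ur Dw /(cross _ _ ur Dw); rewrite !inE => /or3P[]/eqP[-> ->] t01;
  by rewrite ?qr ?qr' ?qc ?qc'; region_lra.
- move=> u w u' w' s t ur Dw u'r Dw' /(cross _ _ ur Dw) + /(cross _ _ u'r Dw').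
  rewrite !inE => /or3P[]/eqP[-> ->] /or3P[]/eqP[-> ->] // _ s01 t01;
  by rewrite ?qr ?qr' ?qc ?qc'; region_lra.
Qed.

Lemma rooted_form_close (Y : {set V}) r a b p1 :
  r \notin Y -> a \in Y -> b \in Y -> (forall y, y \in Y -> e r y -> y = a \/ y = b) ->
  planar_on Y p1 -> terminal_form true Y a b p1 ->
  exists p, planar_on (r |: Y) p /\ rooted_form (r |: Y) r p.
Proof.
move=> rY aY bY only_ab planar1 [pa pa' pb pb' inY].
pose q := with_rung r (frame_close \o p1).
have q_Y w : orig w \in Y -> q w = frame_close (p1 w).
  by move=> Yw; rewrite /q (with_rung_off _ rY Yw).
have [qr qr'] : q (inl r) = (0, 0) /\ q (inr r) = (1, 0).
  by split; [apply: with_rung_root|apply: with_rung_shadow].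
have [qa qa'] : q (inl a) = frame_close (1, 0) /\ q (inr a) = frame_close (0, 2/5).
  by rewrite !q_Y // pa pa'.
have [qb qb'] : q (inl b) = frame_close (1, 1) /\ q (inr b) = frame_close (0, 3/5).
  by rewrite !q_Y // pb pb'.
have det : (1/4) * (3/5) - 0 * (1/4) <> 0 by lra.
have cross u w : orig u = r -> orig w \in Y -> sE u w ->
    (u, w) \in bridge_edges r a ++ bridge_edges r b.
  move=> ur Yw uw; have [/(only_ab _ Yw) ab] := root_edge_cases e_sym rY ur Yw uw.
  by rewrite mem_cat; case: ab => <- ->; rewrite ?orbT.
exists q; apply: (rooted_form_attach e_sym e_irr (h := 1/10)
  (B := image_region frame_close quad_same)) => //.
- lra.
- by apply: (eq_planar_on _ (planar_on_affine det planar1)) => w /q_Y ->.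
- by apply: (eq_drawn_in _ (drawn_in_affine inY)) => w /q_Y ->.
- by move=> z zB; region_lra.
- move=> u w t ur Yw /(cross _ _ ur Yw); rewrite !inE => /or3P[| |/or4P[]]/eqP[-> ->] t01;
  by rewrite ?qr ?qr' ?qa ?qa' ?qb ?qb'; region_lra.
- move=> u w u' w' s t ur Yw u'r Yw' /(cross _ _ ur Yw) + /(cross _ _ u'r Yw').
  rewrite !inE => /or3P[| |/or4P[]]/eqP[-> ->] /or3P[| |/or4P[]]/eqP[-> ->] // _ s01 t01;
  by rewrite ?qr ?qr' ?qa ?qa' ?qb ?qb'; region_lra.
Qed.

Lemma terminal_form_edge (H R : {set V}) a b p1 p2 :
  [disjoint H & R] -> (forall x y, x \in H -> y \in R -> e x y -> x = a /\ y = b) ->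
  a \in H -> b \in R -> planar_on H p1 -> rooted_form H a p1 ->
  planar_on R p2 -> rooted_form R b p2 ->
  exists p, planar_on (H :|: R) p /\ terminal_form false (H :|: R) a b p.
Proof.
move=> HR only_ab aH bR planar1 form1 planar2 form2.
have [pa pa' _] := form1; have [pb pb' _] := form2.
have det1 : (-1) * (4/5) - (-1/2) * (-2/5) <> 0 by lra.
have det2 : 1 * (-2/5) - (1/2) * (-2/5) <> 0 by lra.
pose q := join_on H (frame_edge_root \o p1) (frame_edge_rest \o p2).
have [planar inK] : planar_on (H :|: R) q /\ drawn_in (H :|: R) q (quad false).
  apply: (bridge_join e_sym HR only_ab (planar_on_affine det1 planar1)
    (planar_on_affine det2 planar2) (drawn_in_affine (rooted_form_drawn_in e_irr form1))
    (drawn_in_affine (rooted_form_drawn_in e_irr form2))).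
  - by move=> z z1 z2; region_lra.
  - by move=> z z1; region_lra.
  - by move=> z z2; region_lra.
  - move=> uw; rewrite !inE => /or3P[]/eqP-> t t01 /=;
    by rewrite ?pa ?pa' ?pb ?pb'; region_lra.
  - move=> uw uw'; rewrite !inE => /or3P[]/eqP-> /or3P[]/eqP->;
    rewrite ?eqxx //= => _ s t s01 t01;
    by rewrite ?pa ?pa' ?pb ?pb'; region_lra.
exists q; split=> //; split=> //;
  rewrite /q /join_on /= ?aH ?(disjointFl HR bR) /= ?pa ?pa' ?pb ?pb';
  by rewrite /frame_edge_root /frame_edge_rest /affine /=; f_equal; field.
Qed.

Lemma terminal_form_extend (H R : {set V}) a c b same p1 p2 :
  [disjoint H & R] -> (forall x y, x \in H -> y \in R -> e x y -> x = a /\ y = c) ->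
  a \in H -> b \in R -> planar_on H p1 -> rooted_form H a p1 ->
  planar_on R p2 -> terminal_form same R c b p2 ->
  exists p, planar_on (H :|: R) p /\ terminal_form (~~ same) (H :|: R) a b p.
Proof.
move=> HR only_ac aH bR planar1 form1 planar2 [pc pc' pb pb' inR].
have [pa pa' _] := form1.
have det1 : (-1) * (3/10) - (-1/2) * (if same then -2/5 else 2/5) <> 0 by case: (same); lra.
have det2 : (-1) * (1/2) - 0 * (if same then 1/5 else -1/5) <> 0 by case: (same); lra.
pose q := join_on H (frame_extend_root same \o p1) (frame_extend_rest same \o p2).
have [planar inK] : planar_on (H :|: R) q /\ drawn_in (H :|: R) q (quad (~~ same)).
  apply: (bridge_join e_sym HR only_ac (planar_on_affine det1 planar1)
    (planar_on_affine det2 planar2) (drawn_in_affine (rooted_form_drawn_in e_irr form1))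
    (drawn_in_affine inR)).
  - by case: (same) => z z1 z2; region_lra.
  - by case: (same) => z z1; region_lra.
  - by case: (same) => z z2; region_lra.
  - move=> uw; rewrite !inE => /or3P[]/eqP-> t t01 /=; rewrite ?pa ?pa' ?pc ?pc';
    by case: (same); region_lra.
  - move=> uw uw'; rewrite !inE => /or3P[]/eqP-> /or3P[]/eqP->;
    rewrite ?eqxx //= => _ s t s01 t01;
    by rewrite ?pa ?pa' ?pc ?pc'; case: (same); region_lra.
exists q; split=> //; split=> //;
  rewrite /q /join_on /= ?aH ?(disjointFl HR bR) /= ?pa ?pa' ?pb ?pb';
  by case: (same); rewrite /frame_extend_root /frame_extend_rest /affine /=; f_equal; field.
Qed.

End Templates.

Section CactusGraphs.
Variables (V : finType) (e : rel V).
Hypothesis e_sym : symmetric e.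

Definition induced (X : {set V}) : rel V := fun x y => [&& x \in X, y \in X & e x y].

Definition connected_on (X : {set V}) : Prop :=
  forall x y, x \in X -> y \in X -> connect (induced X) x y.

Definition component (D : {set V}) (c : V) : {set V} := [set z in D | connect (induced D) c z].

Definition outside_path (X : {set V}) (b : V) (q : seq V) (a : V) : bool :=
  [&& q != [::], path e b q, e (last b q) a, uniq q & all (fun v => v \notin X) q].

Lemma induced_sym (X : {set V}) : symmetric (induced X).
Proof. by move=> x y; rewrite /induced /= e_sym andbCA. Qed.

Lemma connect_induced_sym (X : {set V}) x y : connect (induced X) x y = connect (induced X) y x.
Proof. exact/sym_connect_sym/induced_sym. Qed.

Lemma connect_induced_sub (X Y : {set V}) x y :
  X \subset Y -> connect (induced X) x y -> connect (induced Y) x y.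
Proof.
move=> /subsetP XY; apply: connect_sub => u v; rewrite /induced => /and3P[Xu Xv uv].
by apply: connect1; rewrite /induced /= (XY _ Xu) (XY _ Xv).
Qed.

Lemma path_induced (X : {set V}) x s : path (induced X) x s -> path e x s && all (mem X) s.
Proof.
elim: s x => //= y s IHs x; rewrite {1}/induced => /andP[/and3P[_ Xy xy] /IHs/andP[-> ->]].
by rewrite xy Xy.
Qed.

Lemma induced_uniq_path (X : {set V}) x y : connect (induced X) x y ->
  exists s, [/\ path e x s, last x s = y, uniq (x :: s) & all (mem X) s].
Proof.
case/connectP=> p0 p_path ->.
by case: (shortenP p_path) => s /path_induced/andP[s_path sX] s_uniq _; exists s.
Qed.

Lemma connect_exit (E : rel V) (P : pred V) x y : connect E x y -> P x -> ~~ P y ->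
  exists u v, [/\ P u, ~~ P v & E u v].
Proof.
case/connectP=> p + ->; elim: p x => /= [x _ -> //|z p IHp x /andP[xz zp] Px].
by case: (boolP (P z)) => [/(IHp _ zp)|Nz _]; last by exists x, z.
Qed.

Lemma connect_within (X Z : {set V}) t z :
  connected_on X -> z \in X -> t \in X -> z \in Z ->
  (forall x y, x \in Z -> x != t -> y \in X -> e x y -> y \in Z) -> connect (induced Z) z t.
Proof.
move=> X_conn Xz Xt Zz Z_closed; case/connectP: (X_conn _ _ Xz Xt) => p.
elim: p z Zz {Xz} => [z _ _ -> |y p IHp z Zz /= /andP[xy yp] t_last]; first exact: connect0.
case: (eqVneq z t) => [->|zt]; first exact: connect0.
move: xy; rewrite /induced => /and3P[_ Xy zy].
have Zy : y \in Z by apply: Z_closed zy.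
by apply: connect_trans (IHp _ Zy yp t_last); apply: connect1; rewrite /induced Zz Zy zy.
Qed.

Lemma component_sub (D : {set V}) c : component D c \subset D.
Proof. by apply/subsetP => z; rewrite inE => /andP[]. Qed.

Lemma component_closed (D : {set V}) c x y :
  x \in component D c -> y \in D -> e x y -> y \in component D c.
Proof.
rewrite !inE => /andP[Dx cx] Dy xy; rewrite Dy.
by apply: connect_trans cx (connect1 _); rewrite /induced Dx Dy xy.
Qed.

Lemma path_component (D : {set V}) c x p : x \in component D c ->
  path (induced D) x p -> path (induced (component D c)) x p.
Proof.
elim: p x => //= y p IHp x Cx; rewrite {1}/induced => /andP[/and3P[_ Dy xy] yp].
have Cy := component_closed Cx Dy xy.
by rewrite {1}/induced Cx Cy xy IHp.
Qed.

Lemma connected_on_component (D : {set V}) c : c \in D -> connected_on (component D c).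
Proof.
move=> Dc; have Cc : c \in component D c by rewrite inE Dc connect0.
have from_c z : z \in component D c -> connect (induced (component D c)) c z.
  rewrite inE => /andP[_ /connectP[p cp ->]].
  by apply/connectP; exists p => //; apply: path_component.
move=> x y /from_c cx /from_c cy; apply: connect_trans cy.
by rewrite connect_induced_sym.
Qed.

Lemma connected_on_hub (X : {set V}) h :
  (forall x, x \in X -> connect (induced X) x h) -> connected_on X.
Proof.
move=> to_h x y /to_h xh /to_h yh; apply: connect_trans xh _.
by rewrite connect_induced_sym.
Qed.

Lemma connected_on_setD_component (X : {set V}) v c : connected_on X -> v \in X ->
  connected_on (X :\: component (X :\ v) c).
Proof.
move=> X_conn Xv; set C := component (X :\ v) c.
have vC : v \notin C by apply/negP => /(subsetP (component_sub _ _)); rewrite !inE eqxx.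
apply: (connected_on_hub (h := v)) => x Zx.
have Xx : x \in X by move: Zx; rewrite inE => /andP[].
apply: (connect_within X_conn Xx Xv Zx).
move=> x' y; rewrite inE => /andP[x'C Xx'] x'v Xy x'y; rewrite inE Xy andbT.
apply: contra x'C => yC; apply: component_closed yC _ _; last by rewrite e_sym.
by rewrite !inE x'v.
Qed.

Lemma connected_on_setU1 (C : {set V}) r c : connected_on C -> c \in C -> e r c ->
  connected_on (r |: C).
Proof.
move=> C_conn Cc rc; apply: (connected_on_hub (h := r)) => x; rewrite !inE.
case/orP=> [/eqP -> |Cx]; first exact: connect0.
apply: connect_trans (connect_induced_sub (subsetUr _ _) (C_conn _ _ Cx Cc)) (connect1 _).
by rewrite /induced !inE eqxx Cc orbT e_sym.
Qed.

Lemma component_neighbour (X : {set V}) v c : connected_on X -> v \in X -> c \in X :\ v ->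
  exists2 u, u \in component (X :\ v) c & e v u.
Proof.
move=> X_conn Xv Dc; have Xc : c \in X by move: Dc; rewrite !inE => /andP[].
have Cc : c \in component (X :\ v) c by rewrite inE Dc connect0.
have Cv : v \notin component (X :\ v) c.
  by apply/negP => /(subsetP (component_sub _ _)); rewrite !inE eqxx.
have [x [y [Cx Cy]]] := connect_exit (X_conn _ _ Xc Xv) Cc Cv.
rewrite /induced => /and3P[_ Xy xy]; exists x; rewrite // e_sym.
case: (eqVneq y v) => [<- //|yv]; case/negP: Cy; apply: component_closed Cx _ xy.
by rewrite !inE yv.
Qed.

Lemma outside_path_rcons (X R : {set V}) a b c q : outside_path X b q a -> a \in X ->
  R \subset X -> a \notin R -> e a c -> outside_path R b (rcons q a) c.
Proof.
case/and5P=> _ bq qa q_uniq /allP qX Xa /subsetP RX aR ac.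
rewrite /outside_path -size_eq0 size_rcons rcons_path last_rcons bq qa ac rcons_uniq q_uniq.
rewrite all_rcons aR /= andbT; apply/andP; split; first by apply: contraL Xa => /qX.
by apply/allP => x /qX; apply: contra => /RX.
Qed.

Lemma graph_cycle_of_path (x u : V) s : e x u -> path e u s -> e (last u s) x ->
  uniq (x :: u :: s) -> s != [::] -> is_graph_cycle e (x :: u :: s).
Proof.
move=> xu us sx C_uniq s_nil; rewrite /is_graph_cycle C_uniq /= rcons_path xu us sx.
by rewrite !ltnS lt0n size_eq0 s_nil.
Qed.

Lemma prev_head (x u : V) s : x \notin u :: s -> prev (x :: u :: s) x = last u s.
Proof. by move=> xNus; rewrite prev_nth mem_head memNindex // -last_nth. Qed.

Lemma cycle_edges_at (x u y : V) s : uniq (x :: u :: s) -> y != x ->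
  [set x; y] \in cycle_edges (x :: u :: s) -> y = u \/ y = last u s.
Proof.
move=> C_uniq yx /imsetP[z Cz xy_z].
have y_in : y \in [set z; next (x :: u :: s) z] by rewrite -xy_z set22.
have : x \in [set z; next (x :: u :: s) z] by rewrite -xy_z set21.
rewrite !inE => /orP[/eqP xz|/eqP x_next].
- by left; move: y_in; rewrite -xz !inE (negbTE yx) /= /next /= eqxx => /eqP.
- right; have zx : z = last u s.
    have xNus : x \notin u :: s by case/andP: C_uniq.
    by have := prev_next C_uniq z; rewrite -x_next prev_head.
  by move: y_in; rewrite -x_next !inE (negbTE yx) orbF zx => /eqP.
Qed.

Hypothesis cactus_e : forall c1 c2 : seq V, is_graph_cycle e c1 -> is_graph_cycle e c2 ->
  cycle_edges c1 != cycle_edges c2 -> [disjoint cycle_edges c1 & cycle_edges c2].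

(* Two cycles through the edge [x u] have the same edge set, hence they leave
   [x] through the same second edge. *)
Lemma cactus_cycles_last (x u : V) s1 s2 : is_graph_cycle e (x :: u :: s1) ->
  is_graph_cycle e (x :: u :: s2) -> last u s1 = last u s2.
Proof.
move=> C1 C2.
have head_edge s : [set x; u] \in cycle_edges (x :: u :: s).
  by apply/imsetP; exists x; rewrite ?mem_head // /next /= eqxx.
have edges_eq : cycle_edges (x :: u :: s1) = cycle_edges (x :: u :: s2).
  apply/eqP/negPn/negP => /(cactus_e C1 C2) /disjointFr /(_ (head_edge s1)).
  by rewrite head_edge.
case/and3P: C2 => C2_uniq; case: s2 C2_uniq edges_eq => // z s2 C2_uniq edges_eq _ _.
have xNus : x \notin u :: z :: s2 by case/andP: C2_uniq.
have last_in : last u (z :: s2) \in z :: s2 := mem_last z s2.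
have last_x : last u (z :: s2) != x by apply: contraNneq xNus => <-; rewrite in_cons last_in orbT.
case/andP: C1 => C1_uniq _; case: (cycle_edges_at C1_uniq last_x _) => [|u_last|<- //].
- rewrite edges_eq setUC; apply/imsetP; exists (last u (z :: s2)).
    by rewrite 2!in_cons last_in !orbT.
  by rewrite -(prev_head xNus) next_prev.
- have u_in : u \in z :: s2 by rewrite -u_last.
  by move: C2_uniq; rewrite /= u_in /= andbF.
Qed.

Lemma cactus_two_neighbours (D : {set V}) r a b c : r \notin D -> connected_on D ->
  a \in D -> b \in D -> c \in D -> a != b -> a != c -> e r a -> e r b -> e r c -> b = c.
Proof.
move=> rD D_conn Da Db Dc ab ac ra rb rc.
have cycle_to y : y \in D -> a != y -> e r y ->
    exists s, is_graph_cycle e (r :: a :: s) /\ last a s = y.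
  move=> Dy ay ry; have [s [s_path s_last s_uniq sD]] := induced_uniq_path (D_conn _ _ Da Dy).
  exists s; split=> //; apply: graph_cycle_of_path => //; first by rewrite s_last e_sym.
    rewrite cons_uniq s_uniq andbT inE negb_or; apply/andP; split.
      by apply: contraNneq rD => ->.
    by apply: contra rD => /(allP sD).
  by apply: contra_neq ay => s_nil; rewrite -s_last s_nil.
have [s [Cs <-]] := cycle_to b Db ab rb; have [t [Ct <-]] := cycle_to c Dc ac rc.
exact: cactus_cycles_last Cs Ct.
Qed.

Lemma cactus_unique_neighbour (Y : {set V}) a b q u w : a \in Y -> b \in Y -> a != b ->
  outside_path Y b q a -> u \in component (Y :\ a) b -> w \in component (Y :\ a) b ->
  e a u -> e a w -> u = w.
Proof.
move=> Ya Yb ab /and5P[q_nil bq qa q_uniq /allP qY] Ru Rw au aw.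
case: (eqVneq u w) => // uw; exfalso.
have Yb' : b \in Y :\ a by rewrite !inE eq_sym ab Yb.
have R_Y x : x \in component (Y :\ a) b -> x \in Y /\ x != a.
  by move/(subsetP (component_sub _ _)); rewrite !inE => /andP[].
have aNR t : all (mem (component (Y :\ a) b)) t -> a \notin t.
  by move=> tR; apply/negP => /(allP tR) /R_Y[_]; rewrite eqxx.
have R_conn := connected_on_component Yb'.
have Rb : b \in component (Y :\ a) b by rewrite inE Yb' connect0.
have [s' [s'_path s'_last s'_uniq s'R]] := induced_uniq_path (R_conn _ _ Ru Rb).
have [s [s_path s_last s_uniq sR]] := induced_uniq_path (R_conn _ _ Ru Rw).
have uR : all (mem (component (Y :\ a) b)) (u :: s') by rewrite /= Ru.
have q_last : last b q \in q by move: (q_nil); case: (q) => // v q' _; exact: (mem_last v q').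
have C1 : is_graph_cycle e (a :: u :: (s' ++ q)).
  apply: graph_cycle_of_path => //.
  - by rewrite cat_path s'_path s'_last bq.
  - by rewrite last_cat s'_last.
  - rewrite -cat_cons cons_uniq mem_cat negb_or (aNR _ uR) cat_uniq s'_uniq q_uniq andbT /=.
    apply/andP; split; first by apply: contraL Ya => /qY.
    by apply/hasPn => x /qY; apply: contra => /(allP uR) /R_Y[].
  - by move: q_nil; case: (s').
have C2 : is_graph_cycle e (a :: u :: s).
  apply: graph_cycle_of_path => //; first by rewrite s_last e_sym.
    by rewrite cons_uniq s_uniq andbT aNR //= Ru.
  by apply: contra_neq uw => s_nil; rewrite -s_last s_nil.
have := cactus_cycles_last C1 C2; rewrite last_cat s'_last s_last => last_w.
by have := qY _ q_last; rewrite last_w (R_Y _ Rw).1.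
Qed.

End CactusGraphs.
Section Drawability.
Variables (V : finType) (e : rel V) (col : V -> bool).
Hypotheses (e_sym : symmetric e) (e_irr : irreflexive e).
Hypothesis cactus_e : forall c1 c2 : seq V, is_graph_cycle e c1 -> is_graph_cycle e c2 ->
  cycle_edges c1 != cycle_edges c2 -> [disjoint cycle_edges c1 & cycle_edges c2].
Hypothesis col_e : forall x y, e x y -> col x != col y.

Local Notation planar_on := (planar_on e).
Local Notation rooted_form := (rooted_form e).
Local Notation terminal_form := (terminal_form e).
Local Notation connected_on := (connected_on e).
Local Notation component := (component e).
Local Notation outside_path := (outside_path e).

Definition rooted_drawable (X : {set V}) : Prop :=
  forall r, r \in X -> connected_on X -> exists p, planar_on X p /\ rooted_form X r p.

Definition terminal_drawable (X : {set V}) : Prop :=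
  forall a b q, a \in X -> b \in X -> a != b -> connected_on X -> outside_path X b q a ->
  exists p, planar_on X p /\ terminal_form (col a == col b) X a b p.

Lemma col_neighbours x y z : e x y -> e x z -> (col y == col z) = true.
Proof. by move=> /col_e + /col_e; case: (col x) (col y) (col z) => [] [] []. Qed.

Section Step.
Variable X : {set V}.
Hypothesis IH : forall Y : {set V}, Y \proper X -> rooted_drawable Y /\ terminal_drawable Y.

Let smaller (Y : {set V}) x : Y \subset X -> x \in X -> x \notin Y ->
  rooted_drawable Y /\ terminal_drawable Y.
Proof. by move=> YX Xx Yx; apply/IH/properP; split=> //; exists x. Qed.

Lemma rooted_drawable_cut r c : r \in X -> connected_on X -> c \in X :\ r -> e r c ->
  ~~ (X :\ r \subset component (X :\ r) c) ->
  exists p, planar_on X p /\ rooted_form X r p.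
Proof.
move=> Xr X_conn Dc rc; set C := component (X :\ r) c; case/subsetPn=> z Dz Cz.
have CD : C \subset X :\ r by apply: component_sub.
have DX := subD1set X r; have CX := subset_trans CD DX.
have Cc : c \in C by rewrite inE Dc connect0.
have rC : r \notin C by apply/negP => /(subsetP CD); rewrite !inE eqxx.
have Xz := subsetP DX z Dz; have Xc := subsetP DX c Dc.
have X1X : r |: C \subset X by rewrite subUset sub1set Xr CX.
have zX1 : z \notin r |: C.
  by rewrite in_setU1 negb_or Cz andbT; apply: contraTneq Dz => ->; rewrite !inE eqxx.
have [rooted1 _] := smaller X1X Xz zX1.
have cX2 : c \notin X :\: C by rewrite inE Cc.
have rX2 : r \in X :\: C by rewrite inE rC.
have [rooted2 _] := smaller (subsetDl X _) Xc cX2.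
have [p1 [planar1 form1]] := rooted1 r (setU11 _ _)
  (connected_on_setU1 e_sym (connected_on_component e_sym Dc) Cc rc).
have [p2 [planar2 form2]] := rooted2 r rX2
  (connected_on_setD_component e_sym (c := c) X_conn Xr).
have meet x : x \in r |: C -> x \in X :\: C -> x = r.
  by rewrite in_setU1 in_setD => /orP[/eqP //|->].
have no_cross x y : x \in r |: C -> y \in X :\: C -> x <> r -> y <> r -> ~~ e x y.
  rewrite in_setU1 in_setD => /orP[/eqP //|Cx] /andP[Cy Xy] _ /eqP yr.
  by apply: contra Cy => xy; apply: component_closed Cx _ xy; rewrite !inE yr.
have [p [planar form]] := rooted_form_glue e_sym e_irr (setU11 _ _) rX2
  meet no_cross planar1 form1 planar2 form2.
have XU : (r |: C) :|: (X :\: C) = X.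
  rewrite -setUA -{1}(setIidPr CX) setID.
  by apply/setUidPr; rewrite sub1set.
by rewrite XU in planar form; exists p.
Qed.

Lemma rooted_drawable_close r c b : r \in X -> c \in X :\ r -> b \in X :\ r -> b != c ->
  e r c -> e r b -> connected_on (X :\ r) -> exists p, planar_on X p /\ rooted_form X r p.
Proof.
move=> Xr Dc Db bc rc rb D_conn.
have rD : r \notin X :\ r by rewrite !inE eqxx.
have [_ terminalD] := smaller (subD1set X r) Xr rD.
have cb : c != b by rewrite eq_sym.
have rpath : outside_path (X :\ r) b [:: r] c by rewrite /outside_path /= rD e_sym rb rc.
have [p1 [planar1 form1]] := terminalD c b [:: r] Dc Db cb D_conn rpath.
rewrite (col_neighbours rc rb) in form1.
have only_cb y : y \in X :\ r -> e r y -> y = c \/ y = b.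
  move=> Dy ry; case: (eqVneq y c) => [|yc]; [by left|right].
  apply/esym/(cactus_two_neighbours e_sym cactus_e rD D_conn Dc Db Dy cb) => //.
  by rewrite eq_sym.
have [p [planar form]] := rooted_form_close e_sym e_irr rD Dc Db only_cb planar1 form1.
by exists p; rewrite -(setD1K Xr).
Qed.

Lemma rooted_drawable_pendant r c : r \in X -> c \in X :\ r ->
  connected_on (X :\ r) -> (forall y, y \in X :\ r -> e r y -> y = c) ->
  exists p, planar_on X p /\ rooted_form X r p.
Proof.
move=> Xr Dc D_conn only_c.
have rD : r \notin X :\ r by rewrite !inE eqxx.
have [rootedD _] := smaller (subD1set X r) Xr rD.
have [p1 [planar1 form1]] := rootedD c Dc D_conn.
have [p [planar form]] := rooted_form_pendant e_sym e_irr rD Dc only_c planar1 form1.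
by exists p; rewrite -(setD1K Xr).
Qed.

Lemma rooted_drawable_step : rooted_drawable X.
Proof.
move=> r Xr X_conn; case: (set_0Vmem (X :\ r)) => [D0|[z Dz]].
  rewrite -(setD1K Xr) D0 setU0.
  have [planar _ form] := single_rung e_irr (with_rung_root r (fun=> (0, 0)))
    (with_rung_shadow r (fun=> (0, 0))).
  by exists (with_rung r (fun=> (0, 0))).
have [c zc rc] := component_neighbour e_sym X_conn Xr Dz.
have Dc := subsetP (component_sub e (X :\ r) z) c zc.
case: (boolP (X :\ r \subset component (X :\ r) c)) => [DC|]; last exact: rooted_drawable_cut.
have D_conn : connected_on (X :\ r).
  have <- : component (X :\ r) c = X :\ r by apply/eqP; rewrite eqEsubset component_sub.
  exact: connected_on_component.
case: (pickP [pred b | [&& b \in X :\ r, b != c & e r b]]) => [b /and3P[Db bc rb]|none].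
  exact: rooted_drawable_close Db bc rc rb D_conn.
apply: rooted_drawable_pendant Dc D_conn _ => // y Dy ry; apply/eqP.
by apply: contraFT (none y) => yc; rewrite /= Dy yc ry.
Qed.

Lemma terminal_drawable_step : terminal_drawable X.
Proof.
move=> a b q Xa Xb ab X_conn bqa.
have Db : b \in X :\ a by rewrite !inE eq_sym ab.
set R := component (X :\ a) b.
have [a2 Ra2 aa2] := component_neighbour e_sym X_conn Xa Db.
have R_conn := connected_on_component e_sym Db.
have Rb : b \in R by rewrite inE Db connect0.
have RX : R \subset X := subset_trans (component_sub _ _ _) (subD1set X a).
have aR : a \notin R.
  by apply/negP => /(subsetP (component_sub e _ _)); rewrite !inE eqxx.
have Ha : a \in X :\: R by rewrite inE aR.
have /subsetDP[_ HR] := subxx (X :\: R).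
have only_aa2 x y : x \in X :\: R -> y \in R -> e x y -> x = a /\ y = a2.
  rewrite in_setD => /andP[Rx Xx] Ry xy; case: (eqVneq x a) => [xa|xa].
    rewrite xa in xy; split=> //.
    exact: (cactus_unique_neighbour e_sym cactus_e Xa Xb ab bqa Ry Ra2 xy aa2).
  by case/negP: Rx; apply: component_closed Ry _ _; [rewrite !inE xa|rewrite e_sym].
have bH : b \notin X :\: R by rewrite in_setD Rb.
have [rootedH _] := smaller (subsetDl X _) Xb bH.
have [p1 [planar1 form1]] := rootedH a Ha (connected_on_setD_component e_sym (c := b) X_conn Xa).
have [rootedR terminalR] := smaller RX Xa aR.
have XHR : (X :\: R) :|: R = X by rewrite setUC -[RHS](setID X R) (setIidPr RX).
rewrite -XHR; case: (eqVneq a2 b) => [a2b|a2b].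
  rewrite a2b in aa2 only_aa2; have [p2 [planar2 form2]] := rootedR b Rb R_conn.
  rewrite (negbTE (col_e aa2)).
  exact: (terminal_form_edge e_sym e_irr HR only_aa2 Ha Rb planar1 form1 planar2 form2).
have [p2 [planar2 form2]] := terminalR a2 b (rcons q a) Ra2 Rb a2b R_conn
  (outside_path_rcons bqa Xa RX aR aa2).
have -> : (col a == col b) = ~~ (col a2 == col b).
  by move: (col_e aa2); case: (col a) (col a2) (col b) => [] [] [].
exact: (terminal_form_extend e_sym e_irr HR only_aa2 Ha Rb planar1 form1 planar2 form2).
Qed.

End Step.

Lemma shadow_drawable X : rooted_drawable X /\ terminal_drawable X.
Proof.
elim: {X}_.+1 {-2}X (ltnSn #|X|) => // n IHn X X_n.
have IH (Y : {set V}) : Y \proper X -> rooted_drawable Y /\ terminal_drawable Y.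
  by move/proper_card => YX; apply: IHn; apply: leq_trans YX X_n.
by split; [apply: rooted_drawable_step|apply: terminal_drawable_step].
Qed.

End Drawability.

Theorem lemma6p4 (V : finType) (e : rel V) :
  simple_graph e -> cactus e -> bipartite e -> planar (great_shadow e).
Proof.
move=> [e_sym e_irr] [e_conn e_cactus] [col col_e].
case: (pickP (fun _ : V => true)) => [r _|V0]; last first.
  have no_vertex (w : V + V) : False by case: w => v; have := V0 v.
  by exists (fun=> (0, 0)), (fun _ _ _ => (0, 0)); split; [|split] => u; case: (no_vertex u).
have setT_conn : connected_on e setT.
  move=> x y _ _; rewrite (@eq_connect _ _ e) ?e_conn //.
  by move=> u v; rewrite /induced !in_setT.
have [rooted _] := shadow_drawable e_sym e_irr e_cactus col_e setT.
have [p [planar _]] := rooted r (in_setT r) setT_conn.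
by exists p, (fun u v => seg (p u) (p v)); apply: planar_drawing_of_planar_on.
Qed.
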